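(* Let $X$ be a reflexive Banach space with norm $\|\cdot\|$, dual space $X^*$ with dual norm $\|\cdot\|_*$ and canonical pairing $\langle\cdot,\cdot\rangle$. Let $L>0$, $\sigma>0$, $N\ge1$, and let real coefficients $\{a_{k,i}\}_{0\le i<k\le N}$, $\{b_{k,i}\}_{0\le i\le k\le N}$ be given with the convention $b_{0,0}=-1$. Let $\{u_i\}_{i=0}^N$ be a positive nondecreasing sequence of reals and set $v_i=1/u_{N-i}$ for $i=0,\dots,N$. Define $\mathbf{U}_{\mathcal A},\mathbf{V}_{\mathcal B}\colon (X^* )^{N+1}\times X^{N+1}\to\mathbb{R}$ as follows. For $(A_0,\dots,A_N,B_0,\dots,B_N)$, put $A_{N+1}=0$, $x_0=B_0$, $x_{k+1}=x_k-\sum_{i=0}^{k+1}b_{k+1,i}B_i$ ($k=0,\dots,N-1$), and \[ \mathbf{U}_{\mathcal A}=\sum_{k=0}^{N-1}\frac{u_k}{2L}\|A_k-A_{k+1}\|_*^2+\sum_{k=0}^{N-1}\frac{\sigma}{2}\|B_k-B_{k+1}\|^2+\sum_{k=0}^{N-1}\Big\langle\sum_{i=0}^{k}a_{k+1,i}A_i,\,B_{k+1}\Big\rangle-\sum_{k=0}^{N}u_k\langle A_k-A_{k+1},x_k\rangle . \] For $(C_0,\dots,C_N,D_0,\dots,D_N)$, put \[ \mathbf{V}_{\mathcal B}=\sum_{k=0}^{N-1}\frac{v_{k+1}}{2L}\|C_k-C_{k+1}\|_*^2+\sum_{k=0}^{N-1}\frac{\sigma}{2}\|D_k-D_{k+1}\|^2+\sum_{k=0}^{N}\Big\langle\sum_{i=0}^{k}b_{N-i,N-k}C_i,\,D_k\Big\rangle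 \] \[ \qquad+\sum_{k=0}^{N-1}\Big\langle v_{k+1}C_{k+1}-\sum_{j=0}^{k}(v_{j+1}-v_j)C_j,\ \sum_{i=0}^{k}a_{N-i,N-1-k}D_i\Big\rangle . \] Then \[ \inf_{(X^* )^{N+1}\times X^{N+1}}\mathbf{U}_{\mathcal A}=\inf_{(X^* )^{N+1}\times X^{N+1}}\mathbf{V}_{\mathcal B} \] (as elements of $\mathbb{R}\cup\{-\infty\}$).
   Context: Here $\mathbf{U}_{\mathcal A}$ is the residual (after telescoping) of a standard energy-function proof of a bound on $f(x_N)-f(x)$ for the CFOM $y_{k+1}=y_k-\sum_{i\le k}a_{k+1,i}\nabla f(x_i)$, $x_{k+1}=x_k-\sum_{i\le k+1}b_{k+1,i}\nabla\phi^*(y_i)$, with $A_i$ standing for $\nabla f(x_i)$ and $B_i$ for $\nabla\phi^*(y_i)$; $\mathbf{V}_{\mathcal B}$ is the analogous residual for its mirror dual $q_{k+1}=q_k-\sum_{i\le k}a_{N-i,N-1-k}\nabla\psi^*(r_i)$, $r_{k+1}=r_k-\sum_{i\le k+1}b_{N-i,N-1-k}\nabla f(q_i)$, $r_0=-b_{N,N}\nabla f(q_0)$, with $C_i$ standing for $\nabla f(q_i)$ and $D_i$ for $\nabla\psi^*(r_i)$. The claim is purely about the two explicit functions above. *)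

From HB Require Import structures.
From mathcomp Require Import all_boot all_order all_algebra.
From mathcomp Require Import all_classical all_reals all_analysis.
Set Implicit Arguments. Unset Strict Implicit. Unset Printing Implicit Defensive.
Import Order.TTheory GRing.Theory Num.Theory.
Import numFieldNormedType.Exports.
Local Open Scope classical_set_scope.
Local Open Scope ring_scope.

Section Defs.
Variables (R : realType) (X : normedModType R).

Definition dual_el (f : X -> R) : Prop :=
  [/\ (forall x y : X, f (x + y) = f x + f y),
      (forall (a : R) (x : X), f (a *: x) = a * f x) &
      continuous f].

Definition dnorm (f : X -> R) : R :=
  sup [set `|f x| | x in [set x : X | `|x| <= 1]].

(** Reflexivity: the canonical embedding X -> X^** is onto, i.e. every
    bounded linear functional Phi on X^* is evaluation at some x in X. *)
Definition reflexive_space : Prop :=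
  forall Phi : (X -> R) -> R,
    (forall f g, dual_el f -> dual_el g -> Phi (fun x => f x + g x) = Phi f + Phi g) ->
    (forall (a : R) f, dual_el f -> Phi (fun x => a * f x) = a * Phi f) ->
    (exists C : R, forall f, dual_el f -> `|Phi f| <= C * dnorm f) ->
    exists x : X, forall f, dual_el f -> Phi f = f x.

Definition fsub (f g : X -> R) : X -> R := fun x => f x - g x.

Fixpoint xseq (b : nat -> nat -> R) (B : nat -> X) (k : nat) : X :=
  match k with
  | 0 => B 0%N
  | k'.+1 => xseq b B k' - \sum_(0 <= i < k'.+2) b k'.+1 i *: B i
  end.

Variables (L sigma : R) (N : nat) (a b : nat -> nat -> R) (u : nat -> R).

Definition Aext (A : nat -> X -> R) (k : nat) : X -> R :=
  if (k <= N)%N then A k else (fun _ => 0).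

Definition U_A (A : nat -> X -> R) (B : nat -> X) : R :=
  \sum_(0 <= k < N) (u k / (2 * L)) * (dnorm (fsub (A k) (A k.+1))) ^+ 2
  + \sum_(0 <= k < N) (sigma / 2) * `|B k - B k.+1| ^+ 2
  + \sum_(0 <= k < N) (\sum_(0 <= i < k.+1) a k.+1 i * A i (B k.+1))
  - \sum_(0 <= k < N.+1) u k * (fsub (A k) (Aext A k.+1)) (xseq b B k).

Definition v (i : nat) : R := 1 / u (N - i)%N.

Definition V_B (C : nat -> X -> R) (D : nat -> X) : R :=
  \sum_(0 <= k < N) (v k.+1 / (2 * L)) * (dnorm (fsub (C k) (C k.+1))) ^+ 2
  + \sum_(0 <= k < N) (sigma / 2) * `|D k - D k.+1| ^+ 2
  + \sum_(0 <= k < N.+1) (\sum_(0 <= i < k.+1) b (N - i)%N (N - k)%N * C i (D k))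
  + \sum_(0 <= k < N)
      (fun x => v k.+1 * C k.+1 x
                - \sum_(0 <= j < k.+1) (v j.+1 - v j) * C j x)
      (\sum_(0 <= i < k.+1) a (N - i)%N (N - 1 - k)%N *: D i).

Definition inf_U : \bar R :=
  ereal_inf [set y | exists (A : nat -> X -> R) (B : nat -> X),
     (forall i, (i <= N)%N -> dual_el (A i)) /\ y = (U_A A B)%:E].

Definition inf_V : \bar R :=
  ereal_inf [set y | exists (C : nat -> X -> R) (D : nat -> X),
     (forall i, (i <= N)%N -> dual_el (C i)) /\ y = (V_B C D)%:E].

End Defs.

(* The substitution
     C_i = \sum_{l <= i} u_{N-l} (A_{N-l} - A_{N-l+1}),     D_k = B_{N-k}
   is a bijection on pairs (A, B) of (N+1)-tuples of functionals and points:
   the differences C_i - C_{i-1} recover u_{N-i} (A_{N-i} - A_{N-i+1}), hence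
   A, because every u_i is nonzero.
   Under it V_B(C, D) = U_A(A, B) term by term.  The squared-norm sums match
   after reversing the summation index, since v_{k+1} u_{N-1-k}^2 = u_{N-1-k};
   the weights v_{k+1} C_{k+1} - \sum_{j <= k} (v_{j+1} - v_j) C_j telescope
   to A_{N-1-k}, which turns the a-term of V_B into that of U_A; and, writing
   x_k = - \sum_{m <= l <= k} b_{l,m} B_m (this is where b_{0,0} = -1 enters),
   both b-terms become \sum_{m <= l <= k} b_{l,m} u_k (A_k - A_{k+1})(B_m).
   So U_A and V_B take the same set of values and have the same infimum. *)
From Pilot Require Import Defs.
From HB Require Import structures.
From mathcomp Require Import all_boot all_order all_algebra.
From mathcomp Require Import all_classical all_reals all_analysis.
From mathcomp Require Import zify ring.
Import Order.TTheory GRing.Theory Num.Theory.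
Import numFieldNormedType.Exports.
Set Implicit Arguments. Unset Strict Implicit.
Local Open Scope classical_set_scope.
Local Open Scope ring_scope.

Lemma sup_image_scale (R : realType) (T : Type) (S : set T) (h : T -> R) (c : R) :
  0 < c -> sup [set c * h x | x in S] = c * sup [set h x | x in S].
Proof.
move=> c_gt0.
have has_sup_scale : has_sup [set h x | x in S] -> has_sup [set c * h x | x in S].
  move=> [[_ [x Sx _]] [M ubM]]; split; first by exists (c * h x), x.
  exists (c * M) => _ [z Sz <-]; rewrite ler_pM2l //; apply: ubM; by exists z.
have has_sup_unscale : has_sup [set c * h x | x in S] -> has_sup [set h x | x in S].
  move=> [[_ [x Sx _]] [M ubM]]; split; first by exists (h x), x.
  exists (M / c) => _ [z Sz <-]; rewrite ler_pdivlMr // mulrC; apply: ubM; by exists z.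
have [hs|hs] := boolp.pselect (has_sup [set h x | x in S]); last first.
  by rewrite !sup_out ?mulr0 // => /has_sup_unscale.
have [chs_ne _] := has_sup_scale hs.
apply/le_anti/andP; split.
  apply: ge_sup => // _ [x Sx <-]; rewrite ler_pM2l //.
  by apply: sup_upper_bound => //; exists x.
rewrite -ler_pdivlMl //; apply: ge_sup; first by case: hs.
move=> _ [x Sx <-]; rewrite ler_pdivlMl //.
by apply: sup_upper_bound; [exact: has_sup_scale | exists x].
Qed.

Section DualFunctionals.
Variables (R : realType) (X : normedModType R).
Implicit Types (f g : X -> R) (c : R).

Lemma dnormZ f c : c != 0 -> dnorm (fun x => c * f x) = `|c| * dnorm f.
Proof.
rewrite -normr_gt0 => c_gt0; rewrite /dnorm -sup_image_scale //.
congr sup; apply: boolp.funext => y; apply: boolp.propext.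
by split=> -[x Bx <-]; exists x => //; rewrite normrM.
Qed.

Lemma dualf0 f : dual_el f -> f 0 = 0.
Proof. by case=> fD _ _; apply: (addIr (f 0)); rewrite -fD !add0r. Qed.

Lemma dualfZ f c y : dual_el f -> f (c *: y) = c * f y.
Proof. by case. Qed.

Lemma dualfN f y : dual_el f -> f (- y) = - f y.
Proof. by move=> df; rewrite -scaleN1r dualfZ // mulN1r. Qed.

Lemma dualf_sum f m n (F : nat -> X) : dual_el f ->
  f (\sum_(m <= i < n) F i) = \sum_(m <= i < n) f (F i).
Proof. by move=> df; have [fD _ _] := df; apply: big_morph; [exact: fD|exact: dualf0]. Qed.

Lemma dual_el_cst0 : dual_el (fun _ : X => 0 : R).
Proof.
by split; [move=> *; rewrite addr0 | move=> *; rewrite mulr0 | exact: cst_continuous].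
Qed.

Lemma dual_el_add f g : dual_el f -> dual_el g -> dual_el (fun x => f x + g x).
Proof.
move=> [fD fZ fc] [gD gZ gc]; split.
- by move=> x y; rewrite fD gD addrACA.
- by move=> c x; rewrite fZ gZ mulrDr.
- by move=> x; apply: continuousD; [exact: fc|exact: gc].
Qed.

Lemma dual_el_scale c f : dual_el f -> dual_el (fun x => c * f x).
Proof.
move=> [fD fZ fc]; split.
- by move=> x y; rewrite fD mulrDr.
- by move=> d x; rewrite fZ mulrCA.
- by move=> x; apply: continuousM; [exact: cst_continuous|exact: fc].
Qed.

Lemma dual_el_sub f g : dual_el f -> dual_el g -> dual_el (fun x => f x - g x).
Proof.
move=> df dg; rewrite (_ : (fun x => _) = fun x => f x + (-1) * g x).
  exact: dual_el_add df (dual_el_scale _ dg).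
by apply: boolp.funext => x; rewrite mulN1r.
Qed.

Lemma dual_el_sum (F : nat -> X -> R) m n :
  (forall i, (m <= i < n)%N -> dual_el (F i)) ->
  dual_el (fun x => \sum_(m <= i < n) F i x).
Proof.
elim: n => [|n IHn] dF; first by rewrite (_ : (fun x => _) = fun=> 0);
  [exact: dual_el_cst0 | apply: boolp.funext => x; rewrite big_geq].
have [le_mn|lt_nm] := leqP m n; last first.
  rewrite (_ : (fun x => _) = fun=> 0); first exact: dual_el_cst0.
  by apply: boolp.funext => x; rewrite big_geq.
rewrite (_ : (fun x => _) = fun x => \sum_(m <= i < n) F i x + F n x); last first.
  by apply: boolp.funext => x; rewrite big_nat_recr.
apply: dual_el_add; last by apply: dF; rewrite le_mn ltnSn.
by apply: IHn => i /andP[mi lt_in]; apply: dF; rewrite mi ltnW.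
Qed.

End DualFunctionals.

Section BigNat.
Variable (R : zmodType).

Lemma big_nat_widen_mkcond (F : nat -> R) m n : (m <= n)%N ->
  \sum_(0 <= t < n) (if (t < m)%N then F t else 0) = \sum_(0 <= t < m) F t.
Proof. by move=> le_mn; rewrite (big_nat_widen _ _ _ _ _ le_mn) [RHS]big_mkcond. Qed.

Lemma big_nat_rev_subn (F : nat -> R) n :
  \sum_(0 <= i < n.+1) F i = \sum_(0 <= i < n.+1) F (n - i)%N.
Proof. by rewrite [LHS]big_nat_rev; apply: eq_bigr => i _; rewrite add0n subSS. Qed.

End BigNat.

Section ChangeOfVariables.
Variables (R : realType) (X : normedModType R) (L sigma : R) (N : nat)
  (a b : nat -> nat -> R) (u : nat -> R).
Hypothesis u_neq0 : forall i, (i <= N)%N -> u i != 0.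

Implicit Types (A C : nat -> X -> R) (B D : nat -> X).

Let v := v N u.

Definition udiff A j x := u j * (Aext N A j x - Aext N A j.+1 x).
Definition toC A i x := \sum_(0 <= l < i.+1) udiff A (N - l)%N x.
Definition toD B k := B (N - k)%N.

Definition Cdiff C l x := C l x - (if l is l'.+1 then C l' x else 0).
Definition ofC C j x := \sum_(0 <= l < (N - j).+1) (u (N - l)%N)^-1 * Cdiff C l x.

Lemma Aext_id A k : (k <= N)%N -> Aext N A k = A k.
Proof. by rewrite /Aext => ->. Qed.

Lemma Aext_out A x : Aext N A N.+1 x = 0.
Proof. by rewrite /Aext ltnn. Qed.

Lemma dual_el_udiff A j : (forall i, (i <= N)%N -> dual_el (A i)) -> dual_el (udiff A j).
Proof.
have dAext k : (forall i, (i <= N)%N -> dual_el (A i)) -> dual_el (Aext N A k).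
  by rewrite /Aext; case: ifP => [kN /(_ _ kN)|_ _]; last exact: dual_el_cst0.
by move=> dA; apply/dual_el_scale/dual_el_sub; apply: dAext.
Qed.

Lemma dual_el_toC A i : (forall i, (i <= N)%N -> dual_el (A i)) -> dual_el (toC A i).
Proof. by move=> dA; apply: dual_el_sum => l _; apply: dual_el_udiff. Qed.

Lemma toC0 A x : toC A 0 x = udiff A N x.
Proof. by rewrite /toC big_nat1 subn0. Qed.

Lemma toCS A i x : toC A i.+1 x = toC A i x + udiff A (N - i.+1) x.
Proof. by rewrite /toC big_nat_recr. Qed.

Lemma v_udiff A j x : v j * udiff A (N - j) x = Aext N A (N - j) x - Aext N A (N - j).+1 x.
Proof. by rewrite /v /Defs.v /udiff mulrA mul1r mulVf ?mul1r // u_neq0 ?leq_subr. Qed.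

Lemma toC_telescope A k x : (k < N)%N ->
  v k.+1 * toC A k.+1 x - \sum_(0 <= j < k.+1) (v j.+1 - v j) * toC A j x
  = Aext N A (N - k.+1) x.
Proof.
elim: k => [|k IHk] ltkN.
  rewrite big_nat1 toCS toC0.
  transitivity (v 1 * udiff A (N - 1) x + v 0 * udiff A (N - 0) x).
    by rewrite subn0; ring.
  by rewrite !v_udiff subn0 Aext_out subn1 prednK //; ring.
rewrite big_nat_recr //= toCS.
transitivity ((v k.+1 * toC A k.+1 x - \sum_(0 <= j < k.+1) (v j.+1 - v j) * toC A j x)
   + v k.+2 * udiff A (N - k.+2) x); first by ring.
by rewrite IHk 1?ltnW // v_udiff subnSK //; ring.
Qed.

Lemma sum_dnorm_toC A :
  \sum_(0 <= k < N) (v k.+1 / (2 * L)) * dnorm (fsub (toC A k) (toC A k.+1)) ^+ 2 =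
  \sum_(0 <= k < N) (u k / (2 * L)) * dnorm (fsub (A k) (A k.+1)) ^+ 2.
Proof.
rewrite [RHS]big_nat_rev /=; apply: eq_big_nat => k /andP[_ ltkN].
rewrite add0n; set j := (N - k.+1)%N.
have ltjN : (j < N)%N by rewrite /j subnSK ?leq_subr.
have -> : fsub (toC A k) (toC A k.+1) = (fun x => - u j * fsub (A j) (A j.+1) x).
  apply: boolp.funext => x.
  by rewrite /fsub toCS /udiff -/j !Aext_id ?(ltnW ltjN) //; ring.
have u_j0 : u j != 0 by rewrite u_neq0 // ltnW.
rewrite (dnormZ (fsub (A j) (A j.+1))) ?oppr_eq0 // normrN exprMn real_normK ?num_real //.
rewrite /v /Defs.v -/j mul1r expr2.
by rewrite [_^-1 / _]mulrC -!mulrA mulKf // mulrCA.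
Qed.

Lemma sum_norm_toD B :
  \sum_(0 <= k < N) (sigma / 2) * `|toD B k - toD B k.+1| ^+ 2 =
  \sum_(0 <= k < N) (sigma / 2) * `|B k - B k.+1| ^+ 2.
Proof.
rewrite [RHS]big_nat_rev /=; apply: eq_big_nat => k /andP[_ ltkN].
by rewrite add0n /toD subnSK // distrC.
Qed.

Lemma a_coupling_toC A B : (forall i, (i <= N)%N -> dual_el (A i)) ->
  \sum_(0 <= k < N)
      (fun x => v k.+1 * toC A k.+1 x - \sum_(0 <= j < k.+1) (v j.+1 - v j) * toC A j x)
      (\sum_(0 <= i < k.+1) a (N - i)%N (N - 1 - k)%N *: toD B i)
  = \sum_(0 <= k < N) \sum_(0 <= i < k.+1) a k.+1 i * A i (B k.+1).
Proof.
move=> dA.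
transitivity (\sum_(0 <= s < N) \sum_(0 <= t < N.+1)
   (if (s < t)%N then a t s * A s (B t) else 0)).
  rewrite big_nat_rev /=; apply: eq_big_nat => k /andP[_ ltkN]; rewrite add0n.
  have dAk := dA k (ltnW ltkN).
  rewrite toC_telescope; last by lia.
  have [-> ->] : (N - (N - k.+1).+1 = k /\ N - 1 - (N - k.+1) = k)%N by lia.
  rewrite Aext_id ?dualf_sum // ?(ltnW ltkN) // subnSK //.
  rewrite -(@big_nat_widen_mkcond _ _ (N - k) N.+1); last by lia.
  rewrite big_nat_rev_subn; apply: eq_big_nat => i /andP[_ ltiN].
  rewrite (_ : (N - i < N - k)%N = (k < i)%N); last by apply/idP/idP; lia.
  by rewrite /toD subKn 1?dualfZ.
transitivity (\sum_(0 <= s < N) \sum_(0 <= k < N)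
   (if (s < k.+1)%N then a k.+1 s * A s (B k.+1) else 0)).
  by apply: eq_bigr => s _; rewrite big_nat_recl //= add0r.
rewrite exchange_big_nat /=; apply: eq_big_nat => k /andP[_ ltkN].
by rewrite big_nat_widen_mkcond.
Qed.

Lemma xseqE B k : b 0%N 0%N = -1 ->
  xseq b B k = - \sum_(0 <= l < k.+1) \sum_(0 <= m < l.+1) b l m *: B m.
Proof.
move=> b00; elim: k => [|k IHk] /=; first by rewrite !big_nat1 b00 scaleN1r opprK.
by rewrite IHk [in RHS]big_nat_recr //= opprD.
Qed.

Definition b_pairing A B := \sum_(0 <= k < N.+1) \sum_(0 <= l < N.+1) \sum_(0 <= m < N.+1)
   (if (l <= k)%N && (m <= l)%N then b l m * udiff A k (B m) else 0).

Lemma U_b_term A B : b 0%N 0%N = -1 -> (forall i, (i <= N)%N -> dual_el (A i)) ->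
  - \sum_(0 <= k < N.+1) u k * fsub (A k) (Aext N A k.+1) (xseq b B k) = b_pairing A B.
Proof.
move=> b00 dA; rewrite -sumrN; apply: eq_big_nat => k /andP[_ lekN].
have dAk := dual_el_udiff k dA.
have -> : u k * fsub (A k) (Aext N A k.+1) (xseq b B k) = udiff A k (xseq b B k).
  by rewrite /udiff /fsub (Aext_id A lekN).
rewrite xseqE // dualfN // opprK dualf_sum //.
rewrite -(@big_nat_widen_mkcond _ _ k.+1 N.+1) //; apply: eq_bigr => l _.
rewrite ltnS dualf_sum //; case: ifP => lelk /=; last by rewrite big1.
rewrite -(@big_nat_widen_mkcond _ _ l.+1 N.+1); last by lia.
by apply: eq_bigr => m _; rewrite dualfZ // ltnS.
Qed.

Lemma V_b_term A B :
  \sum_(0 <= k < N.+1) \sum_(0 <= i < k.+1) b (N - i)%N (N - k)%N * toC A i (toD B k)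
  = b_pairing A B.
Proof.
transitivity (\sum_(0 <= m < N.+1) \sum_(0 <= l < N.+1) \sum_(0 <= k < N.+1)
   (if (m <= l)%N && (l <= k)%N then b l m * udiff A k (B m) else 0)).
  rewrite [LHS]big_nat_rev_subn; apply: eq_big_nat => m /andP[_ ltmN].
  rewrite /toD subKn; last by lia.
  rewrite -(@big_nat_widen_mkcond _ _ (N - m).+1 N.+1); last by lia.
  rewrite big_nat_rev_subn; apply: eq_big_nat => l /andP[_ ltlN].
  rewrite subKn; last by lia.
  rewrite (_ : (N - l < (N - m).+1)%N = (m <= l)%N); last by apply/idP/idP; lia.
  case: ifP => lelm /=; last by rewrite big1.
  rewrite /toC mulr_sumr -(@big_nat_widen_mkcond _ _ (N - l).+1 N.+1); last by lia.
  rewrite big_nat_rev_subn; apply: eq_big_nat => k /andP[_ ltkN].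
  rewrite subKn; last by lia.
  by rewrite (_ : (N - k < (N - l).+1)%N = (l <= k)%N); last by apply/idP/idP; lia.
rewrite /b_pairing; under eq_bigr => m _ do rewrite exchange_big_nat.
rewrite exchange_big_nat; apply: eq_bigr => k _; rewrite exchange_big_nat.
by apply: eq_bigr => l _; apply: eq_bigr => m _; rewrite andbC.
Qed.

Lemma V_B_toC_toD A B : b 0%N 0%N = -1 -> (forall i, (i <= N)%N -> dual_el (A i)) ->
  V_B L sigma N a b u (toC A) (toD B) = U_A L sigma N a b u A B.
Proof.
move=> b00 dA; rewrite /V_B /U_A.
by rewrite sum_dnorm_toC sum_norm_toD a_coupling_toC // V_b_term -U_b_term //; ring.
Qed.

Lemma V_B_eq_on C C' D D' :
  (forall i, (i <= N)%N -> C i = C' i) -> (forall i, (i <= N)%N -> D i = D' i) ->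
  V_B L sigma N a b u C D = V_B L sigma N a b u C' D'.
Proof.
move=> eqC eqD; rewrite /V_B; congr (_ + _ + _ + _).
- by apply: eq_big_nat => k /andP[_ ltkN]; rewrite eqC ?eqC // ltnW.
- by apply: eq_big_nat => k /andP[_ ltkN]; rewrite eqD ?eqD // ltnW.
- apply: eq_big_nat => k /andP[_ ltkN]; rewrite eqD //.
  by apply: eq_big_nat => i /andP[_ ltik]; rewrite eqC //; lia.
- apply: eq_big_nat => k /andP[_ ltkN] /=.
  have -> : \sum_(0 <= i < k.+1) a (N - i)%N (N - 1 - k)%N *: D i =
            \sum_(0 <= i < k.+1) a (N - i)%N (N - 1 - k)%N *: D' i.
    by apply: eq_big_nat => i /andP[_ ltik]; rewrite eqD //; lia.
  rewrite eqC //; congr (_ - _).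
  by apply: eq_big_nat => j /andP[_ ltjk]; rewrite eqC //; lia.
Qed.

Lemma udiff_ofC C j x : (j <= N)%N -> udiff (ofC C) j x = Cdiff C (N - j) x.
Proof.
move=> lejN; have u_j0 := u_neq0 lejN; rewrite /udiff Aext_id //.
have [ltjN|] := ltnP j N.
  by rewrite Aext_id // /ofC subnSK // big_nat_recr //= subKn //; field.
rewrite leq_eqVlt ltnNge lejN orbF => /eqP eq_jN; subst j.
by rewrite Aext_out /ofC subnn big_nat1 subn0; field.
Qed.

Lemma toC_ofC C i x : (i <= N)%N -> toC (ofC C) i x = C i x.
Proof.
elim: i => [|i IHi] leiN; first by rewrite toC0 udiff_ofC // subnn /Cdiff subr0.
rewrite toCS IHi 1?ltnW // udiff_ofC ?leq_subr // subKn // /Cdiff; ring.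
Qed.

Lemma dual_el_ofC C : (forall i, (i <= N)%N -> dual_el (C i)) ->
  forall j, dual_el (ofC C j).
Proof.
move=> dC j; apply: dual_el_sum => l /andP[_ ltlN].
have le_lN : (l <= N)%N by apply: leq_trans (leq_subr j N).
apply/dual_el_scale/dual_el_sub; first exact: dC.
by case: l ltlN le_lN => [|l] _ ?; [exact: dual_el_cst0 | apply/dC/ltnW].
Qed.

Lemma inf_U_eq_inf_V : b 0%N 0%N = -1 -> inf_U X L sigma N a b u = inf_V X L sigma N a b u.
Proof.
move=> b00; congr ereal_inf; apply/seteqP; split=> _ [A [B [dA ->]]].
  exists (toC A), (toD B); split; last by rewrite V_B_toC_toD.
  by move=> i _; apply: dual_el_toC.
have dofC i : (i <= N)%N -> dual_el (ofC A i) by move=> _; apply: dual_el_ofC.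
exists (ofC A), (toD B); split => //.
rewrite -V_B_toC_toD //; congr (_%:E); apply: V_B_eq_on => i leiN.
  by apply: boolp.funext => x; rewrite toC_ofC.
by rewrite /toD subKn.
Qed.

End ChangeOfVariables.

Theorem theorem3p2 (R : realType) (X : completeNormedModType R)
  (L sigma : R) (N : nat) (a b : nat -> nat -> R) (u : nat -> R) :
  reflexive_space X ->
  0 < L -> 0 < sigma -> (1 <= N)%N ->
  b 0%N 0%N = -1 ->
  (forall i, (i <= N)%N -> 0 < u i) ->
  (forall i, (i < N)%N -> u i <= u i.+1) ->
  inf_U X L sigma N a b u = inf_V X L sigma N a b u.
Proof.
move=> _ _ _ _ b00 u_gt0 _.
by apply: inf_U_eq_inf_V => // i /u_gt0 /lt0r_neq0.
Qed.
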